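(* Let $m,\ell\in\mathbb{N}$ with $m\ge4\ell$, and let $\mathcal{S}=(i_1,\dots,i_{\ell'})\in[m]^{\ell'}$ be a sequence of length $\ell'\le\ell$. Then $\mathcal{S}$ is $(m,\ell)$-clustered or $(m,\ell)$-dispersed.
   Context: $[m]=\{1,\dots,m\}$, $\mathbb{N}=\{1,2,\dots\}$, and $[a,b]$ denotes the integer interval $\{a,\dots,b\}$. Let $I=\{i_1,\dots,i_{\ell'}\}$. $\mathcal{S}$ is $(m,\ell)$-clustered if there exist $k\in\mathbb{N}$, $p_1,\dots,p_k\in[m]$, $q_1,\dots,q_k\in\mathbb{N}$ with: (i) the intervals $[p_c,p_c+q_c]$ are pairwise disjoint, contained in $[1,m]$, and their union contains $I$; (ii) for every $c\in[k]$, with $K_c=[p_c,p_c+q_c]\cap I$, $q_c+1\ge\lfloor\frac{m}{2\ell}\rfloor\cdot\min\big(\max(K_c)-p_c+1,\;p_c+q_c-\min(K_c)+1\big)$; (iii) $\sum_{j=1}^k(q_j+1)+2(\ell-\ell')\le m$. $\mathcal{S}$ is $(m,\ell)$-dispersed if there exist $k\in\mathbb{Z}_{\ge0}$, $\psi,p_1,\dots,p_k\in[m]$ and $\xi,q_1,\dots,q_k\in\mathbb{N}$ such that, with $K=I\cap[\psi,\psi+\xi]$: (i) the intervals $[\psi,\psi+\xi],[p_1,p_1+q_1],\dots,[p_k,p_k+q_k]$ are pairwise disjoint, contained in $[1,m]$, and their union contains $I$; (ii) for $j=1,\dots,k$, $q_j\ge 2\cdot|\{c\in[\ell']:i_c\in[p_j,p_j+q_j]\}|-1$;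 (iii) $K=\{\psi\}$ or $K=\{\psi+\xi\}$; (iv) $\xi\ge\lfloor\frac{m}{2\ell}\rfloor\cdot|\{c:i_c\in K\}|-1$; (v) $(\xi+1)+\sum_{j=1}^k(q_j+1)+2(\ell-\ell')\le m$. *)

From mathcomp Require Import all_boot.
Set Implicit Arguments. Unset Strict Implicit. Unset Printing Implicit Defensive.

Definition in_itv (a b x : nat) : bool := (a <= x) && (x <= b).

(* I = set of entries of S; K = I ∩ [a,b], as a sequence (entries of S in [a,b]). *)
Definition Kseq (S : seq nat) (a b : nat) : seq nat := [seq x <- S | in_itv a b x].

Definition seq_max (s : seq nat) : nat := \max_(x <- s) x.
Definition seq_min (s : seq nat) (dflt : nat) : nat := \big[minn/dflt]_(x <- s) x.

(* [(m,l)]-clustered.  Families p_1..p_k, q_1..q_k are given as functions on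
   indices c < k (index c here corresponds to c+1 in the paper). *)
Definition clustered (m l : nat) (S : seq nat) : Prop :=
  exists (k : nat) (p q : nat -> nat),
    0 < k /\
    (forall c, c < k -> 1 <= p c <= m /\ 1 <= q c) /\
    (forall c d x, c < k -> d < k -> c != d ->
        ~~ (in_itv (p c) (p c + q c) x && in_itv (p d) (p d + q d) x)) /\
    (forall c, c < k -> 1 <= p c /\ p c + q c <= m) /\
    (forall x, x \in S -> exists2 c, c < k & in_itv (p c) (p c + q c) x) /\
    (forall c, c < k ->
       let K := Kseq S (p c) (p c + q c) in
       K != [::] ->
       (m %/ (2 * l)) * minn (seq_max K - p c + 1) (p c + q c - seq_min K m + 1)
         <= q c + 1) /\
    (\sum_(c < k) (q c + 1)) + 2 * (l - size S) <= m.

Definition dispersed (m l : nat) (S : seq nat) : Prop :=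
  exists (k psi xi : nat) (p q : nat -> nat),
    1 <= psi <= m /\ 1 <= xi /\
    (forall j, j < k -> 1 <= p j <= m /\ 1 <= q j) /\
    (forall j x, j < k ->
        ~~ (in_itv psi (psi + xi) x && in_itv (p j) (p j + q j) x)) /\
    (forall c d x, c < k -> d < k -> c != d ->
        ~~ (in_itv (p c) (p c + q c) x && in_itv (p d) (p d + q d) x)) /\
    (1 <= psi /\ psi + xi <= m) /\
    (forall j, j < k -> 1 <= p j /\ p j + q j <= m) /\
    (forall x, x \in S ->
        in_itv psi (psi + xi) x \/ exists2 j, j < k & in_itv (p j) (p j + q j) x) /\
    (* (ii): count with multiplicity of indices c with i_c in [p_j, p_j+q_j] *)
    (forall j, j < k -> 2 * count (in_itv (p j) (p j + q j)) S - 1 <= q j) /\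
    ((forall x, ((x \in S) && in_itv psi (psi + xi) x) = (x == psi)) \/
     (forall x, ((x \in S) && in_itv psi (psi + xi) x) = (x == psi + xi))) /\
    ((m %/ (2 * l)) * count (in_itv psi (psi + xi)) S - 1 <= xi) /\
    (xi + 1) + (\sum_(j < k) (q j + 1)) + 2 * (l - size S) <= m.

From mathcomp Require Import all_boot zify.
Set Implicit Arguments. Unset Strict Implicit. Unset Printing Implicit Defensive.

(* Entries are counted with multiplicity; let D = m %/ (2 l) >= 2.  Take u maximal with
   at least u/2 entries in [1, u] and v minimal with at least (m - v)/2 entries in
   (v, m]: every [1, z] with z > u and every (z, m] with z < v is less than half full,
   and u < v.
   If no entry lies in (u, v], the intervals [1, D u] and (m - D (m - v), m] cluster S:
   their lengths add up to at most 2 D |S|.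
   Otherwise the same counting gives 2 D #(u, v] <= v - u, so some entry y of (u, v],
   of multiplicity c, ends a window of length D c strictly inside (u + 1, v) that holds
   no other entry: take the largest y with y + D #[y, v] <= v (window to its right) or,
   if there is none, the smallest entry of (u, v] (window to its left).  This window is
   [psi, psi + xi]; the two sides of it are at most half full, and an interval that is
   at most half full is covered by disjoint, exactly half-full intervals, cut off
   greedily from the left. *)

Definition itv_mem (iv : nat * nat) : pred nat := in_itv iv.1 (iv.1 + iv.2).
Definition itv_before (iv jv : nat * nat) : bool := iv.1 + iv.2 < jv.1.
Definition itv_within (A B : nat) (iv : nat * nat) : bool :=
  [&& A <= iv.1, iv.1 + iv.2 <= B & 0 < iv.2].

Lemma itv_within_sub A B A' B' iv :
  A' <= A -> B <= B' -> itv_within A B iv -> itv_within A' B' iv.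
Proof. by move=> AA BB /and3P[lo hi pos]; apply/and3P; split=> //; lia. Qed.

Lemma count_pointwise_add (T : Type) (a b c : pred T) (s : seq T) :
  (forall x, c x = a x + b x :> nat) -> count c s = count a s + count b s.
Proof. by move=> abc; elim: s => //= x s ->; rewrite abc addnACA. Qed.

Lemma count_itv_split (S : seq nat) A B C : A <= B.+1 -> B <= C ->
  count (in_itv A C) S = count (in_itv A B) S + count (in_itv B.+1 C) S.
Proof. by move=> AB BC; apply: count_pointwise_add => x; rewrite /in_itv; lia. Qed.

Lemma count_itv_sub (S : seq nat) A B A' B' : A' <= A -> B <= B' ->
  count (in_itv A B) S <= count (in_itv A' B') S.
Proof. by move=> AA BB; apply: sub_count => x; rewrite /in_itv; lia. Qed.

Lemma count_itv1 (S : seq nat) A : count (in_itv A A) S = count (pred1 A) S.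
Proof. by apply: eq_count => x; rewrite /in_itv /= -eqn_leq eq_sym. Qed.

Lemma count_itv_pos (S : seq nat) A B x :
  x \in S -> in_itv A B x -> 0 < count (in_itv A B) S.
Proof. by move=> xS x_in; rewrite -has_count; apply/hasP; exists x. Qed.

Lemma count_itv_skip (S : seq nat) A B :
  A \notin S -> count (in_itv A.+1 B) S = count (in_itv A B) S.
Proof.
move=> AnS; apply: eq_in_count => x xS; have : x != A by apply: contraNneq AnS => <-.
by rewrite /in_itv; lia.
Qed.

Lemma seq_min_ge (s : seq nat) d c : c <= d -> {in s, forall x, c <= x} -> c <= seq_min s d.
Proof.
move=> cd s_ge; rewrite /seq_min big_seq; elim/big_ind: _ => // x y cx cy.
by rewrite leq_min cx.
Qed.

Lemma nondecreasing_meets_succ (f : nat -> nat) n :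
  {homo f : i j / i <= j} -> 1 < f 0 -> f n <= n.+1 -> exists2 k, k <= n & f k = k.+1.
Proof.
move=> f_mono f0; elim: n => [|n IH] fn; first lia.
have [fn_le|fn_gt] := leqP (f n) n.+1.
  by have [k kn fk] := IH fn_le; exists k => //; apply: leqW.
by exists n.+1 => //; have := f_mono n n.+1 (leqnSn n); lia.
Qed.

Definition sparse_cover (S : seq nat) (A B : nat) (I : seq (nat * nat)) : Prop :=
  [/\ all (itv_within A B) I, pairwise itv_before I,
      {in S, forall x, in_itv A B x -> has (itv_mem^~ x) I},
      {in I, forall iv, 2 * count (itv_mem iv) S <= iv.2 + 1}
    & \sum_(iv <- I) (iv.2 + 1) <= 2 * count (in_itv A B) S].

Lemma sparse_cover_nil S A B : count (in_itv A B) S = 0 -> sparse_cover S A B [::].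
Proof.
move=> S_out; split=> //; last by rewrite big_nil.
by move=> x xS x_in; have := count_itv_pos xS x_in; rewrite S_out.
Qed.

Lemma sparse_cover_skip S A B I :
  A \notin S -> sparse_cover S A.+1 B I -> sparse_cover S A B I.
Proof.
move=> AnS [within sorted cover sparse total].
split=> //; last by rewrite -count_itv_skip.
  by apply: sub_all within => iv; apply: itv_within_sub.
move=> x xS x_in; apply: cover => //; have : x != A by apply: contraNneq AnS => <-.
by move: x_in; rewrite /in_itv; lia.
Qed.

Lemma sparse_cover_cons S A k B I :
  2 * count (in_itv A (A + k)) S = k.+1 -> A + k <= B ->
  sparse_cover S (A + k).+1 B I -> sparse_cover S A B ((A, k) :: I).
Proof.
move=> half_full kB [within sorted cover sparse total].
have k_gt0 : 0 < k by lia.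
split.
- apply/andP; split; first by rewrite /itv_within /=; lia.
  by apply: sub_all within => iv; apply: itv_within_sub; lia.
- rewrite /= sorted andbT; apply/allP => iv /(allP within) /and3P[lo hi pos].
  by rewrite /itv_before /=; lia.
- move=> x xS x_in /=; have [xk|kx] := leqP x (A + k).
    by apply/orP; left; move: x_in; rewrite /itv_mem /in_itv /=; lia.
  by apply/orP; right; apply: cover => //; move: x_in; rewrite /in_itv; lia.
- by move=> iv; rewrite inE => /orP[/eqP-> |/sparse]; rewrite // /itv_mem /=; lia.
- by rewrite big_cons (count_itv_split S (leqW (leq_addr k A)) kB) /=; lia.
Qed.

Lemma exists_sparse_cover S A B :
  2 * count (in_itv A B) S <= B.+1 - A -> exists I, sparse_cover S A B I.
Proof.
have [n] := ubnP (B.+1 - A); elim: n A => // n IH A len sparse.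
have [empty|nonempty] := posnP (count (in_itv A B) S).
  by exists [::]; apply: sparse_cover_nil.
(* Cut off the shortest exactly half-full prefix if A is an entry; otherwise drop A,
   unless [A, B] itself is exactly half full. *)
have [AS|AnS] := boolP (A \in S).
  pose f k := 2 * count (in_itv A (A + k)) S.
  have f_mono : {homo f : i j / i <= j}.
    by move=> i j ij; rewrite /f leq_mul2l count_itv_sub ?orbT ?leq_add2l.
  have f0 : 1 < f 0.
    by rewrite /f addn0 count_itv1; move: AS; rewrite -has_pred1 has_count; lia.
  have fB : f (B - A) <= (B - A).+1 by rewrite /f subnKC; lia.
  have [k kB fk] := nondecreasing_meets_succ f_mono f0 fB.
  have Ak_B : A + k <= B by lia.
  have rest_sparse : 2 * count (in_itv (A + k).+1 B) S <= B.+1 - (A + k).+1.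
    by have := count_itv_split S (leqW (leq_addr k A)) Ak_B; rewrite /f in fk; lia.
  have [I cover] := IH (A + k).+1 ltac:(lia) rest_sparse.
  by exists ((A, k) :: I); apply: sparse_cover_cons.
have [slack|tight] := ltnP (2 * count (in_itv A B) S) (B.+1 - A).
  have [I cover] := IH A.+1 ltac:(lia) ltac:(rewrite count_itv_skip //; lia).
  by exists I; apply: sparse_cover_skip.
have AB : A <= B by lia.
have nothing_after : count (in_itv B.+1 B) S = 0.
  by rewrite -(count_pred0 S); apply: eq_count => x; rewrite /in_itv /=; lia.
exists [:: (A, B - A)]; apply: sparse_cover_cons; rewrite subnKC //; first lia.
exact: sparse_cover_nil.
Qed.

Lemma pairwise_itv_disjoint I c d x :
  pairwise itv_before I -> c < size I -> d < size I -> c != d ->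
  ~~ (itv_mem (nth (0, 0) I c) x && itv_mem (nth (0, 0) I d) x).
Proof.
move=> /(pairwiseP (0, 0)) sorted c_lt d_lt; rewrite /itv_mem /in_itv.
case: (ltngtP c d) => [cd|dc|->]; rewrite ?eqxx // => _.
  by have := sorted c d c_lt d_lt cd; rewrite /itv_before; lia.
by have := sorted d c d_lt c_lt dc; rewrite /itv_before; lia.
Qed.

Lemma has_itv_nth I x :
  has (itv_mem^~ x) I -> exists2 j, j < size I & itv_mem (nth (0, 0) I j) x.
Proof. by move=> /hasP[iv /(nthP (0, 0))[j j_lt <-] x_in]; exists j. Qed.

Lemma sum_itv_nth (I : seq (nat * nat)) :
  \sum_(j < size I) ((nth (0, 0) I j).2 + 1) = \sum_(iv <- I) (iv.2 + 1).
Proof. by rewrite (big_nth (0, 0)) big_mkord. Qed.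

Definition cluster_ok (m l : nat) (S : seq nat) (iv : nat * nat) : Prop :=
  let K := Kseq S iv.1 (iv.1 + iv.2) in
  K != [::] ->
  m %/ (2 * l) * minn (seq_max K - iv.1 + 1) (iv.1 + iv.2 - seq_min K m + 1) <= iv.2 + 1.

Lemma cluster_ok_left m l S p q a :
  0 < a -> m %/ (2 * l) * a <= q + 1 ->
  {in S, forall x, in_itv p (p + q) x -> x < p + a} -> cluster_ok m l S (p, q).
Proof.
move=> a_gt0 aq S_left; rewrite /cluster_ok /= => _.
have max_lt : seq_max (Kseq S p (p + q)) <= (p + a).-1.
  apply/bigmax_leqP_seq => x; rewrite mem_filter => /andP[x_in xS] _.
  by have := S_left x xS x_in; lia.
by apply: leq_trans aq; apply: leq_mul => //; rewrite geq_min; apply/orP; left; lia.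
Qed.

Lemma cluster_ok_right m l S p q a :
  0 < a -> p + q <= m -> m %/ (2 * l) * a <= q + 1 ->
  {in S, forall x, in_itv p (p + q) x -> p + q < x + a} -> cluster_ok m l S (p, q).
Proof.
move=> a_gt0 pq_m aq S_right; rewrite /cluster_ok /= => _.
have min_gt : (p + q).+1 - a <= seq_min (Kseq S p (p + q)) m.
  apply: seq_min_ge => [|x]; first lia.
  by rewrite mem_filter => /andP[x_in xS]; have := S_right x xS x_in; lia.
by apply: leq_trans aq; apply: leq_mul => //; rewrite geq_min; apply/orP; right; lia.
Qed.

Lemma clustered_of_seq m l S I :
  I != [::] -> all (itv_within 1 m) I -> pairwise itv_before I ->
  {in S, forall x, has (itv_mem^~ x) I} -> {in I, forall iv, cluster_ok m l S iv} ->
  \sum_(iv <- I) (iv.2 + 1) + 2 * (l - size S) <= m ->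
  clustered m l S.
Proof.
move=> I_ne within sorted cover ok budget.
have within_nth j : j < size I -> itv_within 1 m (nth (0, 0) I j).
  by move=> /(mem_nth (0, 0)); apply: (allP within).
exists (size I), (fun j => (nth (0, 0) I j).1), (fun j => (nth (0, 0) I j).2).
refine (conj _ (conj _ (conj _ (conj _ (conj _ (conj _ _)))))).
- by rewrite lt0n size_eq0.
- by move=> j /within_nth /and3P[]; lia.
- by move=> c d x; apply: pairwise_itv_disjoint.
- by move=> j /within_nth /and3P[]; lia.
- by move=> x /cover /has_itv_nth.
- by move=> j /(mem_nth (0, 0)) /ok.
- by rewrite sum_itv_nth.
Qed.

Lemma dispersed_of_seq m l S psi xi I :
  0 < psi -> 0 < xi -> psi + xi <= m ->
  all (itv_within 1 m) I -> pairwise itv_before I ->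
  {in I, forall iv, itv_before iv (psi, xi) || itv_before (psi, xi) iv} ->
  {in S, forall x, in_itv psi (psi + xi) x \/ has (itv_mem^~ x) I} ->
  {in I, forall iv, 2 * count (itv_mem iv) S <= iv.2 + 1} ->
  (forall x, (x \in S) && in_itv psi (psi + xi) x = (x == psi)) \/
  (forall x, (x \in S) && in_itv psi (psi + xi) x = (x == psi + xi)) ->
  m %/ (2 * l) * count (in_itv psi (psi + xi)) S - 1 <= xi ->
  xi + 1 + \sum_(iv <- I) (iv.2 + 1) + 2 * (l - size S) <= m ->
  dispersed m l S.
Proof.
move=> psi_gt0 xi_gt0 psi_m within sorted apart cover sparse window mass budget.
have within_nth j : j < size I -> itv_within 1 m (nth (0, 0) I j).
  by move=> /(mem_nth (0, 0)); apply: (allP within).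
exists (size I), psi, xi, (fun j => (nth (0, 0) I j).1), (fun j => (nth (0, 0) I j).2).
refine (conj _ (conj _ (conj _ (conj _ (conj _ (conj _ (conj _ (conj _
  (conj _ (conj _ (conj _ _))))))))))).
- lia.
- lia.
- by move=> j /within_nth /and3P[]; lia.
- move=> j x /(mem_nth (0, 0)) /apart.
  by rewrite /itv_before /in_itv /=; lia.
- by move=> c d x; apply: pairwise_itv_disjoint.
- lia.
- by move=> j /within_nth /and3P[]; lia.
- move=> x /cover[]; first by left.
  by move=> /has_itv_nth[j j_lt x_in]; right; exists j.
- by move=> j /(mem_nth (0, 0)) /sparse; rewrite /itv_mem /=; lia.
- exact: window.
- exact: mass.
- by rewrite sum_itv_nth.
Qed.

Definition isolated_window (S : seq nat) (D a b psi xi y : nat) : Prop :=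
  [/\ y = psi \/ y = psi + xi, forall x, (x \in S) && in_itv psi (psi + xi) x = (x == y),
      xi.+1 = D * count (pred1 y) S, a < psi & psi + xi < b].

Lemma exists_right_window S D u v :
  0 < D -> u.+1 \notin S ->
  has (fun y => in_itv u.+1 v y && (y + D * count (in_itv y v) S <= v)) S ->
  exists psi xi y, isolated_window S D u.+1 v psi xi y.
Proof.
move=> D_gt0 u1_notin /hasP[y0 y0S y0_room].
pose P y := (y \in S) && (in_itv u.+1 v y && (y + D * count (in_itv y v) S <= v)).
have exP : exists y, P y by exists y0; rewrite /P y0S.
have ubP y : P y -> y <= v by move=> /and3P[_ /andP[_ ?] _].
case: (ex_maxnP exP ubP) => y /and3P[yS y_in y_room] y_max.
set c := count (pred1 y) S.
have c_gt0 : 0 < c by rewrite /c -has_count has_pred1.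
have Dc_gt0 : 0 < D * c by rewrite muln_gt0 D_gt0.
have Dc_room : y + D * c <= v.
  apply: leq_trans y_room; rewrite leq_add2l leq_mul2l /c -count_itv1 count_itv_sub ?orbT //.
  by move: y_in; rewrite /in_itv; lia.
have y_ne : y != u.+1 by apply: contraNneq u1_notin => <-.
have y_gt : u.+1 < y by move: y_in y_ne; rewrite /in_itv; lia.
exists y, (D * c).-1, y; split; [by left | | by rewrite prednK | by [] | lia].
move=> x; apply/idP/eqP => [/andP[xS x_in] | ->]; last by rewrite yS /in_itv leqnn; lia.
have [//|yx] : x = y \/ y < x by move: x_in; rewrite /in_itv; lia.
have x_v : x <= v by move: x_in; rewrite /in_itv; lia.
have x_no_room : v < x + D * count (in_itv x v) S.
  rewrite ltnNge; apply/negP => x_room.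
  have : P x by rewrite /P xS x_room andbT /in_itv; apply/andP; split; lia.
  by move/y_max; lia.
have count_split : c + count (in_itv x v) S <= count (in_itv y v) S.
  have y_x1 : y <= x.-1.+1 by lia.
  have x1_v : x.-1 <= v by lia.
  have x_gt0 : 0 < x by lia.
  rewrite (count_itv_split S y_x1 x1_v) (prednK x_gt0) leq_add2r.
  by rewrite /c -count_itv1 count_itv_sub //; lia.
move: x_in => /andP[_ x_le].
by have := leq_mul (leqnn D) count_split; rewrite mulnDr; lia.
Qed.

Lemma exists_left_window S D u v :
  v \notin S -> 2 * (D * count (in_itv u.+1 v) S) <= v - u -> has (in_itv u.+1 v) S ->
  ~~ has (fun y => in_itv u.+1 v y && (y + D * count (in_itv y v) S <= v)) S ->
  exists psi xi y, isolated_window S D u.+1 v psi xi y.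
Proof.
move=> v_notin gap /hasP[y0 y0S y0_in] /hasPn no_room.
pose P y := (y \in S) && in_itv u.+1 v y.
have exP : exists y, P y by exists y0; rewrite /P y0S.
case: (ex_minnP exP) => y /andP[yS y_in] y_min.
set M := count (in_itv u.+1 v) S in gap *; set c := count (pred1 y) S.
have count_from_y : count (in_itv y v) S = M.
  apply: eq_in_count => x xS; have := y_min x; rewrite /P xS /=.
  by move: y_in; rewrite /in_itv; lia.
have y_no_room : v < y + D * M.
  by have := no_room y yS; rewrite y_in count_from_y /=; lia.
have DM_gt0 : 0 < D * M by move: y_in => /andP[_ y_v]; lia.
have D_gt0 : 0 < D by move: DM_gt0; rewrite muln_gt0 => /andP[].
have c_gt0 : 0 < c by rewrite /c -has_count has_pred1.
have Dc_gt0 : 0 < D * c by rewrite muln_gt0 D_gt0.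
have c_le : c <= M.
  rewrite /c -count_itv1 -count_from_y count_itv_sub //.
  by move: y_in => /andP[].
have Dc_le := leq_mul (leqnn D) c_le.
have y_ne : y != v by apply: contraNneq v_notin => <-.
have y_v : y < v by move: y_in y_ne; rewrite /in_itv; lia.
exists (y - (D * c).-1), (D * c).-1, y; split; [right; lia | | by rewrite prednK | lia | lia].
move=> x; apply/idP/eqP => [/andP[xS x_in] | ->]; last by rewrite yS /in_itv; lia.
by have := y_min x; rewrite /P xS /=; move: x_in y_in; rewrite /in_itv; lia.
Qed.

Lemma clustered_nil m l : 0 < l -> 4 * l <= m -> clustered m l [::].
Proof.
move=> l_gt0 l_m; apply: (@clustered_of_seq m l [::] [:: (1, 1)]) => //=.
- by rewrite /itv_within /=; lia.
- by rewrite big_seq1 /=; lia.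
Qed.

Lemma exists_left_threshold (S : seq nat) m :
  exists2 u, u <= 2 * count (in_itv 1 u) S &
    forall z, u < z <= m -> 2 * count (in_itv 1 z) S < z.
Proof.
pose P u := (u <= m) && (u <= 2 * count (in_itv 1 u) S).
have exP : exists u, P u by exists 0.
have ubP u : P u -> u <= m by case/andP.
case: (ex_maxnP exP ubP) => u /andP[_ u_dense] u_max; exists u => // z /andP[uz zm].
by rewrite ltnNge; apply: contraTN uz => z_dense; rewrite -leqNgt u_max // /P zm.
Qed.

Lemma exists_right_threshold (S : seq nat) m :
  exists v, [/\ v <= m, m - v <= 2 * count (in_itv v.+1 m) S &
    forall z, z < v -> 2 * count (in_itv z.+1 m) S < m - z].
Proof.
pose P v := m - v <= 2 * count (in_itv v.+1 m) S.
have exP : exists v, P v by exists m; rewrite /P subnn.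
case: (ex_minnP exP) => v v_dense v_min; exists v; split=> //.
  by apply: v_min; rewrite /P subnn.
by move=> z zv; rewrite ltnNge; apply: contraTN zv => z_dense; rewrite -leqNgt v_min.
Qed.

Section Dichotomy.

Variables (m l : nat) (S : seq nat).
Hypotheses (l_gt0 : 0 < l) (l_m : 4 * l <= m) (S_size : size S <= l).
Hypothesis S_range : {in S, forall x, 1 <= x <= m}.

Let D := m %/ (2 * l).

Lemma D_ge2 : 2 <= D.
Proof. by rewrite /D leq_divRL ?muln_gt0 //; lia. Qed.

Lemma D_mul_le : D * (2 * l) <= m.
Proof. exact: leq_divM. Qed.

Lemma count_range : count (in_itv 1 m) S = size S.
Proof. by apply/eqP; rewrite -all_count; apply/allP => x /S_range. Qed.

Lemma dispersed_of_window psi xi y :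
  y = psi \/ y = psi + xi ->
  (forall x, (x \in S) && in_itv psi (psi + xi) x = (x == y)) ->
  xi.+1 = D * count (pred1 y) S -> 0 < psi -> psi + xi <= m ->
  2 * count (in_itv 1 psi.-1) S <= psi.-1 ->
  2 * count (in_itv (psi + xi).+1 m) S <= m - (psi + xi) ->
  dispersed m l S.
Proof.
move=> y_end window xi_eq psi_gt0 psi_m left_sparse right_sparse.
have [IL [L_within L_sorted L_cover L_sparse L_total]] :=
  @exists_sparse_cover S 1 psi.-1 ltac:(lia).
have [IR [R_within R_sorted R_cover R_sparse R_total]] :=
  @exists_sparse_cover S (psi + xi).+1 m ltac:(lia).
set c := count (pred1 y) S in xi_eq.
have yS : y \in S by have := window y; rewrite eqxx => /andP[].
have count_window : count (in_itv psi (psi + xi)) S = c.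
  by rewrite /c; apply: eq_in_count => x xS /=; rewrite -window xS.
have c_gt0 : 0 < c by rewrite /c -has_count has_pred1.
have c_le : c <= l by apply: leq_trans S_size; apply: count_size.
have D2 := D_ge2; have Dl := D_mul_le.
have Dc_le := leq_mul (leqnn D) c_le; have D2l := leq_mul D2 (leqnn l).
have parts : count (in_itv 1 psi.-1) S + c + count (in_itv (psi + xi).+1 m) S = size S.
  have psi1 : 1 <= psi.-1.+1 by lia.
  have psi1_m : psi.-1 <= m by lia.
  rewrite -count_window -count_range (count_itv_split S psi1 psi1_m) (prednK psi_gt0).
  by rewrite (count_itv_split S (_ : psi <= (psi + xi).+1) psi_m) ?addnA //; lia.
have xi_gt0 : 0 < xi by have := leq_mul D2 c_gt0; lia.
apply: (@dispersed_of_seq m l S psi xi (IL ++ IR) psi_gt0 xi_gt0 psi_m).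
- rewrite all_cat (sub_all _ L_within) ?(sub_all _ R_within) // => iv;
    by apply: itv_within_sub; lia.
- rewrite pairwise_cat L_sorted R_sorted !andbT.
  apply/allrelP => iv jv /(allP L_within) /and3P[_ hi _] /(allP R_within) /and3P[lo _ _].
  by rewrite /itv_before; lia.
- move=> iv; rewrite mem_cat => /orP[/(allP L_within)|/(allP R_within)] /and3P[lo hi _];
    by rewrite /itv_before /=; lia.
- move=> x xS; have := S_range xS; rewrite /in_itv => x_range.
  have [x_lt|x_ge] := ltnP x psi.
    by right; rewrite has_cat L_cover // /in_itv; lia.
  have [x_le|x_gt] := leqP x (psi + xi); first by left; lia.
  by right; rewrite has_cat R_cover ?orbT // /in_itv; lia.
- by move=> iv; rewrite mem_cat => /orP[/L_sparse|/R_sparse].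
- by case: y_end => e; [left | right] => x; rewrite window e.
- by rewrite -/D count_window; lia.
- by rewrite big_cat /=; lia.
Qed.

Variables u v : nat.
Hypotheses (u_dense : u <= 2 * count (in_itv 1 u) S)
  (u_sparse : forall z, u < z <= m -> 2 * count (in_itv 1 z) S < z).
Hypotheses (v_le : v <= m) (v_dense : m - v <= 2 * count (in_itv v.+1 m) S)
  (v_sparse : forall z, z < v -> 2 * count (in_itv z.+1 m) S < m - z).

Lemma u_lt_v : u < v.
Proof.
(* u <= 2 |S| <= 2 l <= m - 2 l <= v, and u = v would give m <= 2 |S| <= 2 l. *)
have cu := count_size (in_itv 1 u) S; have cv := count_size (in_itv v.+1 m) S.
rewrite ltnNge; apply/negP => vu; have uv : u = v by lia.
subst v; have := count_itv_split S (_ : 1 <= u.+1) v_le.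
by rewrite count_range; lia.
Qed.

Lemma count_partition :
  count (in_itv 1 u) S + count (in_itv u.+1 v) S + count (in_itv v.+1 m) S = size S.
Proof.
have uv : u.+1 <= v.+1 by have := u_lt_v; lia.
have u_m : u <= m by lia.
rewrite -count_range (count_itv_split S (_ : 1 <= u.+1) u_m) //.
by rewrite (count_itv_split S uv v_le) addnA.
Qed.

Lemma succ_u_notin : u.+1 \notin S.
Proof.
apply/negP => u1S; have u1_m : u.+1 <= m by have := S_range u1S; lia.
have := @u_sparse u.+1; rewrite leqnn u1_m (count_itv_split S (_ : 1 <= u.+1) (leqnSn u)) //.
by rewrite count_itv1; move: u1S; rewrite -has_pred1 has_count; lia.
Qed.

Lemma v_notin : v \notin S.
Proof.
apply/negP => vS; have v_gt0 : 0 < v by have := S_range vS; lia.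
have := @v_sparse v.-1; rewrite (prednK v_gt0) (count_itv_split S (_ : v <= v.+1) v_le) //.
by rewrite count_itv1; move: vS; rewrite -has_pred1 has_count; lia.
Qed.

Lemma gap_sparse : 2 * (D * count (in_itv u.+1 v) S) <= v - u.
Proof.
have := congr1 (muln D) count_partition; rewrite !mulnDr.
have := leq_mul (leqnn D) S_size; have Dl := D_mul_le.
have := leq_pmull (count (in_itv 1 u) S) (ltnW D_ge2).
have := leq_pmull (count (in_itv v.+1 m) S) (ltnW D_ge2).
lia.
Qed.

Lemma dispersed_of_gap : has (in_itv u.+1 v) S -> dispersed m l S.
Proof.
move=> gap.
have [psi [xi [y [y_end window xi_eq u_psi psi_v]]]] :
    exists psi xi y, isolated_window S D u.+1 v psi xi y.
  case: (boolP (has (fun y => in_itv u.+1 v y && (y + D * count (in_itv y v) S <= v)) S)).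
    by apply: exists_right_window succ_u_notin; have := D_ge2; lia.
  exact: exists_left_window v_notin gap_sparse gap.
apply: (dispersed_of_window y_end window xi_eq); [lia | lia | |].
  by have := @u_sparse psi.-1; lia.
by have := @v_sparse (psi + xi) psi_v; lia.
Qed.

Lemma cluster_budget :
  ~~ has (in_itv u.+1 v) S -> D * u + D * (m - v) + 2 * (l - size S) <= m.
Proof.
rewrite has_count -leqNgt leqn0 => /eqP no_mid.
have D2 := D_ge2; have Dl := D_mul_le.
have Du_le := leq_mul (leqnn D) u_dense; have Dw_le := leq_mul (leqnn D) v_dense.
have := congr1 (muln D) count_partition; rewrite no_mid !mulnDr.
have := leq_mul D2 (leqnn (l - size S)); rewrite mulnBr.
have := leq_mul (leqnn D) S_size.
lia.
Qed.

Lemma clustered_of_empty_gap : S != [::] -> ~~ has (in_itv u.+1 v) S -> clustered m l S.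
Proof.
move=> S_ne no_gap; have budget := cluster_budget no_gap; move/hasPn: no_gap => no_gap.
pose w := m - v; have D2 := D_ge2.
have Du2 := leq_mul D2 (leqnn u); have Dw2 := leq_mul D2 (leqnn w).
pose IL := if 0 < u then [:: (1, (D * u).-1)] else [::].
pose IR := if 0 < w then [:: ((m - D * w).+1, (D * w).-1)] else [::].
have cover : {in S, forall x, has (itv_mem^~ x) (IL ++ IR)}.
  move=> x xS; have := S_range xS; have := no_gap x xS.
  by rewrite has_cat /IL /IR /itv_mem /in_itv; case: ifP; case: ifP => /= *; lia.
have IL_ok : {in IL, forall iv, cluster_ok m l S iv}.
  rewrite /IL; case: ifP => // u_gt0 iv; rewrite inE => /eqP->.
  apply: (cluster_ok_left (a := u)) => //; first by rewrite -/D; lia.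
  by move=> x xS; have := no_gap x xS; rewrite /in_itv; lia.
have IR_ok : {in IR, forall iv, cluster_ok m l S iv}.
  rewrite /IR; case: ifP => // w_gt0 iv; rewrite inE => /eqP->.
  apply: (cluster_ok_right (a := w)) => //; [lia | rewrite -/D; lia |].
  by move=> x xS; have := no_gap x xS; rewrite /in_itv; lia.
apply: (@clustered_of_seq m l S (IL ++ IR)).
- have /hasP[x xS _] : has predT S by rewrite has_predT lt0n size_eq0.
  by move: (cover x xS); case: (IL ++ IR).
- by rewrite all_cat /IL /IR; case: ifP; case: ifP => /= *; rewrite /itv_within /=; lia.
- rewrite pairwise_cat /allrel /IL /IR.
  by case: ifP; case: ifP => /= *; rewrite /itv_before /=; lia.
- exact: cover.
- by move=> iv; rewrite mem_cat => /orP[/IL_ok|/IR_ok].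
- rewrite big_cat /IL /IR.
  by case: ifP; case: ifP => /= *; rewrite ?big_nil ?big_seq1 /=; lia.
Qed.

End Dichotomy.

Theorem lemma20 (m l : nat) (S : seq nat) :
  0 < l -> 4 * l <= m ->
  size S <= l ->
  all (fun x => 1 <= x <= m) S ->
  clustered m l S \/ dispersed m l S.
Proof.
move=> l_gt0 l_m S_size /allP S_range.
have [->|S_ne] := eqVneq S [::]; first by left; apply: clustered_nil.
have [u u_dense u_sparse] := exists_left_threshold S m.
have [v [v_le v_dense v_sparse]] := exists_right_threshold S m.
have [gap|no_gap] := boolP (has (in_itv u.+1 v) S).
  by right; apply: dispersed_of_gap gap.
by left; apply: clustered_of_empty_gap no_gap.
Qed.
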